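(* Let $\mathcal{I}=(d,r,D,n,I)$ be a Schubert state and let $\mathcal J=(d+r,r,D+n,n,I)$. Then (1) $\dim\mathcal I=\dim\mathcal J$; (2) $\mathcal I$ is not null if and only if $\mathcal J$ is not null; (3) $\langle\mathcal I\rangle=\langle\mathcal J\rangle$.
   Context: Over an algebraically closed field of arbitrary characteristic; fix a finite set $\mathcal P\subset\mathbb P^1$. $\mathcal Z_{D,n}$ is the unique evenly split (i.e. $\bigoplus\mathcal O(a_i)$, $|a_i-a_j|\le1$) bundle on $\mathbb P^1$ of rank $n$ and degree $-D$; $\mathcal M(d,r,\mathcal W)$ is the moduli space of subbundles of $\mathcal W$ of rank $r$ and degree $-d$. A Schubert state is $(d,r,D,n,I)$ with $d,D\in\mathbb Z$, $0\le r\le n$, and $I$ assigning to each $p\in\mathcal P$ a subset $I^p=\{i^p_1<\dots<i^p_r\}\subseteq\{1,\dots,n\}$. $\operatorname{codim}(\omega_{I^p})=\sum_{a}(n-r+a-i^p_a)$; $\chi(d,r,b,m)=rm+dm-br$; $\dim\mathcal I=\chi(d,r,D-d,n-r)-\sum_p\operatorname{codim}(\omega_{I^p})$. For a complete flag $F_\bullet$ and $J=\{j_1<\dots<j_r\}$, $\Omega^o_J(F_\bullet)=\{V:\dim(V\cap F_k)=\#\{a:j_a\le k\}\ \forall k\}$. For $\mathcal E=\prod_p E^p_\bullet$ a choice of complete flags in the fibers $(\mathcal Z_{D,n})_p$, $\Omega^o(\mathcal I,\mathcal Z_{D,n},\mathcal E)$ is the set of $\mathcal V\in\mathcal M(d,r,\mathcal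 Z_{D,n})$ with $\mathcal V_p\in\Omega^o_{I^p}(E^p_\bullet)$ for all $p$. $\mathcal I$ is non null if this is nonempty for generic $\mathcal E$; $\langle\mathcal I\rangle$ is its number of points for generic $\mathcal E$ if finite and $0$ otherwise. *)

From HB Require Import structures.
From mathcomp Require Import all_boot all_order all_algebra.
From mathcomp Require Import mpoly.
From Stdlib Require Import ClassicalEpsilon.
Unset Printing Implicit Defensive.
Import Order.TTheory GRing.Theory Num.Theory.
Local Open Scope ring_scope.

Section Schubert.
Context {K : closedFieldType}.

(* A finite set P of points of P^1(K), given by chosen homogeneous
   representatives (x,y) != (0,0), pairwise non-proportional. *)
Definition pts_ok {m : nat} (pts : 'I_m -> K * K) : Prop :=
  (forall p, pts p != (0, 0)) /\
  (forall p q, p != q -> (pts p).1 * (pts q).2 != (pts q).1 * (pts p).2).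

(* Splitting type of Z_{D,n} = (+)_i O(a_i): -D = n q + s, 0 <= s < n,
   a_i = q + 1 for i < s and a_i = q otherwise (evenly split, degree -D). *)
Definition zsplit (D : int) (n : nat) (i : 'I_n) : int :=
  ((- D) %/ n)%Z + (nat_of_bool (i%:Z < ((- D) %% n)%Z)%R)%:Z.

(* A homogeneous form of degree e in (X,Y) is stored as its dehomogenization
   f(t) = F(t,1), of size <= e+1; F(x,y) = sum_k f_k x^k y^(e-k). *)
Definition is_form (e : int) (f : {poly K}) : bool := (size f)%:Z <= e + 1.
Definition hev (e : int) (f : {poly K}) (x y : K) : K :=
  \sum_(k < size f) f`_k * x ^+ k * y ^+ `|e - k%:Z|%N.

(* A subbundle of Z = (+)_i O(a_i) of rank r is presented (Grothendieck) as the
   image of a fiberwise injective map (+)_j O(b_j) -> Z, given by an r x n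
   matrix of forms; row j spans the image of O(b_j), entry (j,i) is a form of
   degree a_i - b_j.  Its degree is sum_j b_j. *)
Definition subrep (r n : nat) : Type := {ffun 'I_r -> int} * 'M[{poly K}]_(r, n).

(* fiber of the subbundle at the point with representative (x,y), as a
   subspace (row space) of the fiber Z_(x,y) = K^n *)
Definition fib {r n : nat} (a : 'I_n -> int) (V : subrep r n) (x y : K)
  : 'M[K]_(r, n) :=
  \matrix_(j < r, i < n) hev (a i - V.1 j) (V.2 j i) x y.

Definition is_sub {r n : nat} (a : 'I_n -> int) (d : int) (V : subrep r n)
  : Prop :=
  [/\ forall j i, is_form (a i - V.1 j) (V.2 j i),
      (forall x y : K, (x, y) != (0, 0) -> \rank (fib a V x y) = r) &
      \sum_(j < r) V.1 j = - d].

Definition same_sub {r n : nat} (a : 'I_n -> int) (V W : subrep r n) : Prop :=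
  forall x y : K, (x, y) != (0, 0) -> (fib a V x y == fib a W x y)%MS.

(* complete flag given by an invertible matrix g: F_k = span of first k rows.
   Schubert cell Omega^o_J(F) (J 0-based: j_a <= k  <->  j < k). *)
Definition in_cell {r n : nat} (S : 'M[K]_(r, n)) (J : {set 'I_n})
  (g : 'M[K]_n) : Prop :=
  forall k : 'I_n.+1,
    \rank (S :&: (pid_mx k *m g : 'M[K]_n))%MS = #|[set j in J | (j < k)%N]|.

Definition Omega {m : nat} (pts : 'I_m -> K * K) (d : int) (r : nat)
  (D : int) {n : nat} (I : 'I_m -> {set 'I_n}) (E : 'I_m -> 'M[K]_n)
  (V : subrep r n) : Prop :=
  is_sub (@zsplit D n) d V /\
  forall p, in_cell (fib (@zsplit D n) V (pts p).1 (pts p).2) (I p) (E p).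

Definition flagvec {m n : nat} (E : 'I_m -> 'M[K]_n) : 'I_(m * (n * n)) -> K :=
  fun k => mxvec (\matrix_(p < m, l < n * n) mxvec (E p) 0 l) 0 k.

(* a property of flag data holds generically: on a nonempty Zariski open set,
   i.e. off the zero locus of a nonzero polynomial in the matrix entries *)
Definition generic {m n : nat} (Pr : ('I_m -> 'M[K]_n) -> Prop) : Prop :=
  exists Q : {mpoly K[m * (n * n)]}, Q != 0 /\
    forall E : 'I_m -> 'M[K]_n, (forall p, E p \in unitmx) ->
      meval (flagvec E) Q != 0 -> Pr E.

Definition non_null {m} pts d r D {n} (I : 'I_m -> {set 'I_n}) : Prop :=
  generic (fun E => exists V : subrep r n, Omega pts d r D I E V).

Definition has_points {m} pts d r D {n} (I : 'I_m -> {set 'I_n})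
  (E : 'I_m -> 'M[K]_n) (N : nat) : Prop :=
  exists l : seq (subrep r n),
    [/\ size l = N,
        forall V, V \in l -> Omega pts d r D I E V,
        forall i j, (i < N)%N -> (j < N)%N -> i != j ->
          ~ same_sub (@zsplit D n) (nth (finfun (fun=> 0), 0) l i)
                                (nth (finfun (fun=> 0), 0) l j) &
        forall V, Omega pts d r D I E V ->
          exists2 W, W \in l & same_sub (@zsplit D n) V W].

Definition generic_count {m} pts d r D {n} (I : 'I_m -> {set 'I_n}) (N : nat)
  : Prop := generic (fun E => has_points pts d r D I E N).

(* <I> : the generic number of points if finite, 0 otherwise *)
Definition bracket {m} pts d r D {n} (I : 'I_m -> {set 'I_n}) : nat :=
  match excluded_middle_informative
          (exists N, generic_count pts d r D I N) with
  | left h => proj1_sig (constructive_indefinite_description _ h)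
  | right _ => 0%N
  end.

End Schubert.

(* codim(omega_J) = sum_{a=1}^r (n - r + a - i_a), i_1 < ... < i_r the
   (1-based) elements of J; here J is 0-based so i_a = (a-th smallest).+1 *)
Definition codim (r : nat) {n : nat} (J : {set 'I_n}) : int :=
  let s := sort leq [seq val j | j in J] in
  \sum_(a < r) ((n - r + a.+1)%:Z - ((nth 0%N s a).+1)%:Z).

Definition chi (d : int) (r : nat) (b : int) (m : nat) : int :=
  r%:Z * m%:Z + d * m%:Z - b * r%:Z.

Definition sdim {m : nat} (d : int) (r : nat) (D : int) {n : nat}
  (I : 'I_m -> {set 'I_n}) : int :=
  chi d r (D - d) (n - r) - \sum_(p < m) codim r (I p).

(* Tensoring with O(-1) maps Z_{D,n} onto Z_{D+n,n} and a rank-r subbundle of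
   degree -d onto one of degree -(d+r).  On a presentation (+)_j O(b_j) -> Z it
   lowers every b_j and every a_i by one and keeps the matrix of forms, so all
   fibres, hence all Schubert conditions and the identification of
   presentations, are unchanged.  The dimension count is invariant because
   chi(d+r, r, D+n-(d+r), n-r) = chi(d, r, D-d, n-r). *)
From HB Require Import structures.
From mathcomp Require Import all_boot all_order all_algebra.
From mathcomp Require Import zify ring.
From Stdlib Require Import FunctionalExtensionality PropExtensionality.
Import Order.TTheory GRing.Theory Num.Theory.
Local Open Scope ring_scope.

Lemma zsplitDn (D : int) (n : nat) (i : 'I_n) :
  zsplit (D + n%:Z) n i = zsplit D n i - 1.
Proof.
have n_neq0 : n%:Z != 0 by case: i => i /= ?; apply/eqP; lia.
rewrite /zsplit opprD (addrC (- D)) -(mulN1r n%:Z) divzMDl // modzMDl.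
ring.
Qed.

Lemma sdim_twist (m : nat) (d : int) (r : nat) (D : int) (n : nat)
    (I : 'I_m -> {set 'I_n}) :
  (r <= n)%N -> sdim d r D I = sdim (d + r%:Z) r (D + n%:Z) I.
Proof. by move=> le_rn; rewrite /sdim /chi -subzn //; ring. Qed.

Section Twist.
Variables (K : closedFieldType) (r n : nat).
Implicit Types (V W : @subrep K r n) (D d k : int).

Definition twist k V : @subrep K r n := ([ffun j => V.1 j + k], V.2).

Lemma twistK k : cancel (twist k) (twist (- k)).
Proof.
by case=> b M; congr pair; apply/ffunP => j; rewrite /= !ffunE addrK.
Qed.

Lemma twistNK k : cancel (twist (- k)) (twist k).
Proof. by rewrite -{2}(opprK k); exact: twistK. Qed.

Lemma fib_twist D V x y :
  fib (@zsplit (D + n%:Z) n) (twist (-1) V) x y = fib (@zsplit D n) V x y.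
Proof.
apply/matrixP => j i; rewrite !mxE zsplitDn ffunE /=.
by congr hev; ring.
Qed.

Lemma is_sub_twist D d V :
  is_sub (@zsplit D n) d V <->
  is_sub (@zsplit (D + n%:Z) n) (d + r%:Z) (twist (-1) V).
Proof.
have deg_twist i j : zsplit (D + n%:Z) n i - (twist (-1) V).1 j
                     = zsplit D n i - V.1 j.
  by rewrite zsplitDn ffunE /=; ring.
have sum_twist : \sum_(j < r) (twist (-1) V).1 j = \sum_(j < r) V.1 j - r%:Z.
  under eq_bigr => j _ do rewrite ffunE.
  by rewrite big_split /= sumr_const card_ord mulNrn natz.
rewrite /is_sub sum_twist; split=> -[forms rank_fib deg].
- split=> [j i|x y xy|]; first by rewrite deg_twist.
  + by rewrite fib_twist; exact: rank_fib.
  + by rewrite deg; ring.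
- split=> [j i|x y xy|]; first by rewrite -deg_twist.
  + by rewrite -(fib_twist D); exact: rank_fib.
  + by apply/eqP; move/eqP: deg; rewrite opprD subr_eq addrNK.
Qed.

Lemma Omega_twist m (pts : 'I_m -> K * K) d D (I : 'I_m -> {set 'I_n}) E V :
  Omega pts d r D I E V <->
  Omega pts (d + r%:Z) r (D + n%:Z) I E (twist (-1) V).
Proof.
by rewrite /Omega is_sub_twist; split=> -[sub cells]; split=> // p;
  [rewrite fib_twist | rewrite -(fib_twist D)].
Qed.

Lemma same_sub_twist D V W :
  same_sub (@zsplit D n) V W <->
  same_sub (@zsplit (D + n%:Z) n) (twist (-1) V) (twist (-1) W).
Proof. by split=> eqVW x y xy; move: (eqVW x y xy); rewrite !fib_twist. Qed.

End Twist.

(* [has_points] unfolds to this notion for [Omega] and [same_sub]; [x0] is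
   only the default value of [nth]. *)
Definition has_n_classes {T : eqType} (x0 : T) (P : T -> Prop)
    (eqv : T -> T -> Prop) (N : nat) : Prop :=
  exists l : seq T,
    [/\ size l = N,
        forall V, V \in l -> P V,
        forall i j, (i < N)%N -> (j < N)%N -> i != j ->
          ~ eqv (nth x0 l i) (nth x0 l j) &
        forall V, P V -> exists2 W, W \in l & eqv V W].

Lemma has_n_classes_bij (T : eqType) (x0 : T) (P1 P2 : T -> Prop)
    (eqv1 eqv2 : T -> T -> Prop) (f g : T -> T) (N : nat) :
  cancel g f -> (forall V, P1 V <-> P2 (f V)) ->
  (forall V W, eqv1 V W <-> eqv2 (f V) (f W)) ->
  has_n_classes x0 P1 eqv1 N -> has_n_classes x0 P2 eqv2 N.
Proof.
move=> gK P12 eqv12 [l [size_l P_l sep cover]]; exists (map f l); split.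
- by rewrite size_map.
- by move=> _ /mapP [V Vl ->]; apply/P12; exact: P_l.
- by move=> i j iN jN ij; rewrite !(nth_map x0) ?size_l // -eqv12; exact: sep.
- move=> V P2V; have /cover [W Wl eqvW] : P1 (g V) by apply/P12; rewrite gK.
  by exists (f W); [exact: map_f | rewrite -[V]gK -eqv12].
Qed.

Lemma generic_iff (K : closedFieldType) m n (P Q : ('I_m -> 'M[K]_n) -> Prop) :
  (forall E, P E <-> Q E) -> generic P <-> generic Q.
Proof.
by move=> PQ; split=> -[q [q_neq0 hq]]; exists q; split=> // E E_unit qE;
  apply/PQ; exact: hq.
Qed.

Lemma has_points_twist (K : closedFieldType) m (pts : 'I_m -> K * K) d r D n
    (I : 'I_m -> {set 'I_n}) E N :
  has_points pts d r D I E N <->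
  has_points pts (d + r%:Z) r (D + n%:Z) I E N.
Proof.
split.
- apply: (@has_n_classes_bij _ _ _ _ _ _ (twist K r n (-1)) (twist K r n 1)).
  + exact: twistK.
  + exact: Omega_twist.
  + exact: same_sub_twist.
- apply: (@has_n_classes_bij _ _ _ _ _ _ (twist K r n 1) (twist K r n (-1))).
  + exact: twistNK.
  + by move=> V; rewrite (Omega_twist _ _ _ _ _ _ _ _ _ (twist K r n 1 V)) twistNK.
  + by move=> V W; rewrite (same_sub_twist _ _ _ D) !twistNK.
Qed.

Lemma eq_bracket (K : closedFieldType) m (pts : 'I_m -> K * K) d r D d' D' n
    (I : 'I_m -> {set 'I_n}) :
  (forall N, generic_count pts d r D I N <-> generic_count pts d' r D' I N) ->
  bracket pts d r D I = bracket pts d' r D' I.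
Proof.
move=> count_iff; rewrite /bracket.
suff -> : generic_count pts d r D I = generic_count pts d' r D' I by [].
by apply: functional_extensionality => N; exact: propositional_extensionality.
Qed.

Theorem lemma2p2 (K : closedFieldType) (m : nat) (pts : 'I_m -> K * K)
  (d : int) (r : nat) (D : int) (n : nat) (I : 'I_m -> {set 'I_n}) :
  pts_ok pts -> (r <= n)%N -> (forall p, #|I p| = r) ->
  [/\ sdim d r D I = sdim (d + r%:Z) r (D + n%:Z) I,
      non_null pts d r D I <-> non_null pts (d + r%:Z) r (D + n%:Z) I &
      bracket pts d r D I = bracket pts (d + r%:Z) r (D + n%:Z) I].
Proof.
move=> _ le_rn _; split.
- exact: sdim_twist.
- apply: generic_iff => E; split=> -[V OmegaV].
  + by exists (twist K r n (-1) V); rewrite -Omega_twist.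
  + by exists (twist K r n 1 V); rewrite Omega_twist twistK.
- apply: eq_bracket => N; apply: generic_iff => E.
  exact: has_points_twist.
Qed.
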